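(* Let $(X,d)$ be a complete metric space, let $\alpha\in[0,1)$, and let $F:(0,\infty)\to\mathbb{R}$ be a function having a finite right limit $F(t+0):=\lim_{s\to t^+}F(s)$ at every $t>0$. Suppose $T:X\to X$ satisfies, for all $x,y\in X$ with $Tx\neq Ty$, $F(d(Tx,Ty))\le\alpha F(d(x,y))$. Assume further: $(C_1')$ for $t,s\in(0,\infty)$, $t\le s$ implies $\alpha F(t)<F(s)$; and $(C_2')$ $F(t+0)>0$ for every $t\in(0,\infty)$. Then $T$ is a Picard operator.
   Context: $T$ is a Picard operator if $T$ has a unique fixed point $u\in X$ and for every $x\in X$ the sequence $(T^nx)_{n\in\mathbb{N}}$ converges to $u$. *)

From Stdlib Require Import Reals.
Open Scope R_scope.

Definition is_metric {X : Type} (d : X -> X -> R) : Prop :=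
  (forall x y, 0 <= d x y) /\
  (forall x y, d x y = 0 <-> x = y) /\
  (forall x y, d x y = d y x) /\
  (forall x y z, d x z <= d x y + d y z).

Definition seq_converges {X : Type} (d : X -> X -> R) (u : nat -> X) (l : X) : Prop :=
  forall eps, 0 < eps -> exists N : nat, forall n, (N <= n)%nat -> d (u n) l < eps.

Definition is_cauchy {X : Type} (d : X -> X -> R) (u : nat -> X) : Prop :=
  forall eps, 0 < eps -> exists N : nat,
    forall m n, (N <= m)%nat -> (N <= n)%nat -> d (u m) (u n) < eps.

Definition complete_metric {X : Type} (d : X -> X -> R) : Prop :=
  forall u : nat -> X, is_cauchy d u -> exists l, seq_converges d u l.

Definition right_limit (F : R -> R) (t L : R) : Prop :=
  forall eps, 0 < eps -> exists delta, 0 < delta /\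
    forall s, t < s < t + delta -> Rabs (F s - L) < eps.

Definition picard_operator {X : Type} (d : X -> X -> R) (T : X -> X) : Prop :=
  exists u : X, T u = u /\ (forall v, T v = v -> v = u) /\
    forall x, seq_converges d (fun n => Nat.iter n T x) u.

(* Combining the contraction condition with (C1') gives d(Tx,Ty) < d(x,y)
   whenever Tx <> Ty, and F(d(T^p x, T^p y)) <= alpha^p F(d(x,y)).  Near a
   level eps > 0 the finite right limit bounds F(d(x,y)) from above when
   eps < d(x,y) < eps + delta, while (C1') bounds F(d(T^p x, T^p y)) from below
   by alpha F(eps) > 0 as long as d(T^p x, T^p y) >= eps.  As alpha^p -> 0, some
   power T^p therefore maps pairs at distance < eps + delta to pairs at
   distance < eps.  Together with d(T^n x, T^(n+1) x) -> 0 this makes every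
   orbit Cauchy; its limit is fixed since T is nonexpansive, and a second
   fixed point v <> u would give F(d(u,v)) <= alpha F(d(u,v)) < F(d(u,v)). *)

From Stdlib Require Import Reals Lra Lia.
Open Scope R_scope.

Lemma exists_pow_mul_le (a C D : R) :
  0 <= a < 1 -> 0 < D -> exists n : nat, a ^ n * C <= D.
Proof.
  intros Ha HD.
  destruct (Rle_or_lt C 0) as [HC | HC].
  - exists 0%nat. simpl. lra.
  - assert (Habs : Rabs a < 1) by (rewrite Rabs_right; lra).
    destruct (pow_lt_1_zero a Habs (D / C) (Rdiv_lt_0_compat _ _ HD HC)) as [n Hn].
    exists n. specialize (Hn n (Nat.le_refl n)).
    rewrite Rabs_right in Hn by (apply Rle_ge, pow_le; lra).
    apply Rlt_le. apply (Rmult_lt_compat_r C) in Hn; [| exact HC].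
    unfold Rdiv in Hn. rewrite Rmult_assoc, Rinv_l, Rmult_1_r in Hn; lra.
Qed.

Section Metric.

Context {X : Type} (d : X -> X -> R).
Hypothesis Hd : is_metric d.

Lemma dist_ge0 x y : 0 <= d x y.
Proof. apply Hd. Qed.

Lemma dist_eq0 x y : d x y = 0 <-> x = y.
Proof. apply Hd. Qed.

Lemma dist_xx x : d x x = 0.
Proof. now apply dist_eq0. Qed.

Lemma dist_sym x y : d x y = d y x.
Proof. apply Hd. Qed.

Lemma dist_triangle x y z : d x z <= d x y + d y z.
Proof. apply Hd. Qed.

Lemma dist_gt0 x y : x <> y -> 0 < d x y.
Proof.
  intros Hxy. destruct (dist_ge0 x y) as [Hlt | Heq]; [exact Hlt |].
  now elim Hxy; apply dist_eq0.
Qed.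

Lemma dist_shift_le (u : nat -> X) (N : nat) (eta : R) :
  (forall j, (N <= j)%nat -> d (u j) (u (S j)) < eta) ->
  forall k a, (N <= a)%nat -> d (u a) (u (k + a)%nat) <= INR k * eta.
Proof.
  intros Hstep k a Ha. induction k as [| k IH].
  - simpl. rewrite dist_xx. lra.
  - rewrite S_INR.
    pose proof (dist_triangle (u a) (u (k + a)%nat) (u (S k + a)%nat)).
    assert (Hk : (N <= k + a)%nat) by lia.
    pose proof (Hstep _ Hk). simpl in *. lra.
Qed.

Lemma cauchy_of_tail_dist (u : nat -> X) :
  (forall eps, 0 < eps -> exists M, forall n, (M <= n)%nat -> d (u n) (u M) < eps) ->
  is_cauchy d u.
Proof.
  intros Htail eps Heps.
  destruct (Htail (eps / 2)) as [M HM]; [lra |].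
  exists M. intros m n Hm Hn.
  pose proof (dist_triangle (u m) (u M) (u n)).
  pose proof (HM m Hm). pose proof (HM n Hn). rewrite (dist_sym (u M)) in *. lra.
Qed.

Definition asymptotically_regular (T : X -> X) (x : X) : Prop :=
  forall eta, 0 < eta -> exists N : nat, forall n, (N <= n)%nat ->
    d (Nat.iter n T x) (Nat.iter (S n) T x) < eta.

(* A Meir-Keeler condition on some power T^p, without the usual lower bound
   eps <= d x y on the premise. *)
Definition meir_keeler_power (T : X -> X) : Prop :=
  forall eps, 0 < eps -> exists (delta : R) (p : nat), 0 < delta /\
    forall x y, d x y < eps + delta -> d (Nat.iter p T x) (Nat.iter p T y) < eps.

Lemma orbit_cauchy (T : X -> X) (x : X) :
  meir_keeler_power T -> asymptotically_regular T x ->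
  is_cauchy d (fun n => Nat.iter n T x).
Proof.
  intros HMK Hreg. apply cauchy_of_tail_dist. intros eps Heps.
  destruct (HMK eps Heps) as [delta [p [Hdelta Hpow]]].
  pose proof (pos_INR p) as Hp.
  set (eta := delta / (2 * INR p + 1)).
  assert (Heta : 0 < eta) by (apply Rdiv_lt_0_compat; lra).
  assert (Hdelta_eta : (2 * INR p + 1) * eta = delta) by (unfold eta; field; lra).
  destruct (Hreg eta Heta) as [N HN].
  set (u := fun n => Nat.iter n T x).
  assert (Hshift := dist_shift_le u N eta HN).
  assert (Hpow_u : forall n, Nat.iter p T (u n) = u (p + n)%nat)
    by (intro n; symmetry; apply Nat.iter_add).
  exists (p + N)%nat.
  (* Induction along the orbit: x_(k+p+N) stays eps-close to x_(p+N) because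
     its T^p-preimage x_(k+1+N) is (eps + delta)-close to x_N. *)
  assert (Hclose : forall k, d (u (k + (p + N))%nat) (u (p + N)%nat) < eps).
  { induction k as [| k IH].
    - rewrite dist_xx. lra.
    - assert (Hnext : d (u (S k + (p + N))%nat) (u (p + N)%nat) < eps + eta).
      { pose proof (dist_triangle (u (S k + (p + N))%nat) (u (k + (p + N))%nat) (u (p + N)%nat)).
        assert (Hstep : d (u (k + (p + N))%nat) (u (S k + (p + N))%nat) < eta)
          by (apply HN; lia).
        rewrite dist_sym in Hstep. lra. }
      set (A := u (S k + N)%nat). set (B := u N).
      assert (EA : u (S k + (p + N))%nat = Nat.iter p T A)
        by (unfold A; rewrite Hpow_u; f_equal; lia).
      assert (EB : u (p + N)%nat = Nat.iter p T B) by (unfold B; now rewrite Hpow_u).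
      rewrite EA, EB in *. apply Hpow.
      assert (HA : d A (Nat.iter p T A) <= INR p * eta)
        by (unfold A; rewrite Hpow_u; apply Hshift; lia).
      assert (HB : d (Nat.iter p T B) B <= INR p * eta)
        by (unfold B; rewrite dist_sym, Hpow_u; apply Hshift; lia).
      pose proof (dist_triangle A (Nat.iter p T A) B).
      pose proof (dist_triangle (Nat.iter p T A) (Nat.iter p T B) B).
      lra. }
  intros n Hn. replace n with (n - (p + N) + (p + N))%nat by lia. apply Hclose.
Qed.

Definition nonexpansive (T : X -> X) : Prop := forall x y, d (T x) (T y) <= d x y.

Lemma fixed_point_of_orbit_limit (T : X -> X) (x l : X) :
  nonexpansive T -> seq_converges d (fun n => Nat.iter n T x) l -> T l = l.
Proof.
  intros HT Hl. apply dist_eq0, Rle_antisym; [| apply dist_ge0].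
  apply Rle_plus_epsilon. intros eps Heps.
  destruct (Hl (eps / 2)) as [N HN]; [lra |].
  pose proof (HN N (Nat.le_refl N)). pose proof (HN (S N) (Nat.le_succ_diag_r N)).
  pose proof (dist_triangle (T l) (Nat.iter (S N) T x) l).
  pose proof (HT l (Nat.iter N T x)).
  simpl in *. rewrite (dist_sym l) in *. lra.
Qed.

End Metric.

Section FContraction.

Context {X : Type} (d : X -> X -> R) (T : X -> X) (alpha : R) (F : R -> R).
Hypothesis Hd : is_metric d.
Hypothesis Halpha : 0 <= alpha < 1.
Hypothesis HT : forall x y, T x <> T y -> F (d (T x) (T y)) <= alpha * F (d x y).
Hypothesis HC1 : forall t s, 0 < t -> 0 < s -> t <= s -> alpha * F t < F s.

Lemma F_gt0 t : 0 < t -> 0 < F t.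
Proof. intros Ht. pose proof (HC1 t t Ht Ht (Rle_refl t)). nra. Qed.

Lemma dist_lt_of_image_neq x y : T x <> T y -> d (T x) (T y) < d x y.
Proof.
  intros Hne.
  assert (Hxy : x <> y) by (intros ->; auto).
  pose proof (dist_gt0 _ Hd _ _ Hne) as HTxy. pose proof (dist_gt0 _ Hd _ _ Hxy) as Hxy'.
  destruct (Rlt_or_le (d (T x) (T y)) (d x y)) as [Hlt | Hle]; [exact Hlt |].
  pose proof (HT x y Hne). pose proof (HC1 _ _ Hxy' HTxy Hle). lra.
Qed.

Lemma contraction_nonexpansive : nonexpansive d T.
Proof.
  intros x y. destruct (Rle_or_lt (d (T x) (T y)) (d x y)) as [Hle | Hlt]; [exact Hle |].
  assert (Hne : T x <> T y).
  { intros E. rewrite E, (dist_xx _ Hd) in Hlt. pose proof (dist_ge0 _ Hd x y). lra. }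
  pose proof (dist_lt_of_image_neq x y Hne). lra.
Qed.

Lemma iter_nonexpansive p x y : d (Nat.iter p T x) (Nat.iter p T y) <= d x y.
Proof.
  induction p as [| p IH]; simpl; [lra |].
  eapply Rle_trans; [apply contraction_nonexpansive | exact IH].
Qed.

Lemma dist_iterS_lt p x y :
  Nat.iter (S p) T x <> Nat.iter (S p) T y ->
  d (Nat.iter (S p) T x) (Nat.iter (S p) T y) < d x y.
Proof.
  simpl. intros Hne.
  eapply Rlt_le_trans; [apply dist_lt_of_image_neq, Hne | apply iter_nonexpansive].
Qed.

Lemma F_iter_le p x y :
  Nat.iter p T x <> Nat.iter p T y ->
  F (d (Nat.iter p T x) (Nat.iter p T y)) <= alpha ^ p * F (d x y).
Proof.
  revert x y. induction p as [| p IH]; intros x y Hne; simpl in *; [lra |].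
  assert (Hne' : Nat.iter p T x <> Nat.iter p T y) by (intros E; apply Hne; now rewrite E).
  eapply Rle_trans; [apply HT, Hne |]. rewrite Rmult_assoc.
  apply Rmult_le_compat_l; [lra | apply IH, Hne'].
Qed.

(* (C1') bounds F from below by alpha F(eps) on [eps, oo), which the decaying
   bound alpha^p C eventually undercuts. *)
Lemma dist_iter_lt eps C p x y :
  0 < eps -> F (d x y) <= C -> alpha ^ p * C <= alpha * F eps ->
  d (Nat.iter p T x) (Nat.iter p T y) < eps.
Proof.
  intros Heps HC Hpow.
  destruct (Rlt_or_le (d (Nat.iter p T x) (Nat.iter p T y)) eps) as [Hlt | Hge]; [exact Hlt |].
  assert (Hne : Nat.iter p T x <> Nat.iter p T y).
  { intros E. rewrite E, (dist_xx _ Hd) in Hge. lra. }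
  pose proof (F_iter_le p x y Hne).
  pose proof (HC1 eps _ Heps (Rlt_le_trans _ _ _ Heps Hge) Hge).
  assert (alpha ^ p * F (d x y) <= alpha ^ p * C)
    by (apply Rmult_le_compat_l; [apply pow_le; lra | exact HC]).
  lra.
Qed.

Lemma exists_pow_le_alpha_F C eps :
  0 < eps -> exists q, alpha ^ S q * C <= alpha * F eps.
Proof.
  intros Heps.
  destruct (exists_pow_mul_le alpha C (F eps) Halpha (F_gt0 eps Heps)) as [q Hq].
  exists q. simpl. rewrite Rmult_assoc. apply Rmult_le_compat_l; lra.
Qed.

Lemma contraction_asymptotically_regular x : asymptotically_regular d T x.
Proof.
  intros eta Heta.
  destruct (exists_pow_le_alpha_F (F (d x (T x))) eta Heta) as [q Hq].
  exists (S q). intros n Hn.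
  assert (En : n = ((n - S q) + S q)%nat) by lia.
  rewrite Nat.iter_succ_r, En, !Nat.iter_add.
  eapply Rle_lt_trans; [apply iter_nonexpansive |].
  apply (dist_iter_lt eta (F (d x (T x)))); [exact Heta | apply Rle_refl | exact Hq].
Qed.

Lemma contraction_meir_keeler_power :
  (forall t, 0 < t -> exists L, right_limit F t L) -> meir_keeler_power d T.
Proof.
  intros HFlim eps Heps.
  destruct (HFlim eps Heps) as [L HL].
  destruct (HL 1 Rlt_0_1) as [delta [Hdelta HFnear]].
  destruct (exists_pow_le_alpha_F (L + 1) eps Heps) as [q Hq].
  exists delta, (S q). split; [exact Hdelta |]. intros x y Hxy.
  destruct (Rlt_or_le (d (Nat.iter (S q) T x) (Nat.iter (S q) T y)) eps) as [Hlt | Hge];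
    [exact Hlt |].
  assert (Hne : Nat.iter (S q) T x <> Nat.iter (S q) T y).
  { intros E. rewrite E, (dist_xx _ Hd) in Hge. lra. }
  pose proof (dist_iterS_lt q x y Hne).
  assert (HF : F (d x y) <= L + 1).
  { destruct (Rabs_def2 _ _ (HFnear (d x y) ltac:(lra))). lra. }
  pose proof (dist_iter_lt eps (L + 1) (S q) x y Heps HF Hq). lra.
Qed.

Lemma contraction_fixed_point_unique u v : T u = u -> T v = v -> v = u.
Proof.
  intros Hu Hv. apply (dist_eq0 _ Hd).
  destruct (dist_ge0 _ Hd v u) as [Hpos | Hzero]; [exfalso | now symmetry].
  assert (Hne : T v <> T u).
  { rewrite Hu, Hv. intros ->. rewrite (dist_xx _ Hd) in Hpos. lra. }
  pose proof (HT v u Hne). rewrite Hu, Hv in *.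
  pose proof (HC1 _ _ Hpos Hpos (Rle_refl _)). lra.
Qed.

Lemma contraction_orbit_converges_to_fixed_point x :
  complete_metric d -> (forall t, 0 < t -> exists L, right_limit F t L) ->
  exists l, T l = l /\ seq_converges d (fun n => Nat.iter n T x) l.
Proof.
  intros Hc HFlim.
  assert (Hcauchy : is_cauchy d (fun n => Nat.iter n T x)).
  { apply orbit_cauchy; [exact Hd | now apply contraction_meir_keeler_power |].
    apply contraction_asymptotically_regular. }
  destruct (Hc _ Hcauchy) as [l Hl]. exists l. split; [| exact Hl].
  apply (fixed_point_of_orbit_limit d Hd T x); [apply contraction_nonexpansive | exact Hl].
Qed.

End FContraction.

Theorem mainTheorem9 (X : Type) (d : X -> X -> R) (alpha : R) (F : R -> R) (T : X -> X)
  (HX : inhabited X) (Hd : is_metric d) (Hc : complete_metric d)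
  (Halpha : 0 <= alpha < 1)
  (HFlim : forall t, 0 < t -> exists L, right_limit F t L)
  (HT : forall x y, T x <> T y -> F (d (T x) (T y)) <= alpha * F (d x y))
  (HC1 : forall t s, 0 < t -> 0 < s -> t <= s -> alpha * F t < F s)
  (HC2 : forall t L, 0 < t -> right_limit F t L -> 0 < L) :
  picard_operator d T.
Proof.
  destruct HX as [x0].
  destruct (contraction_orbit_converges_to_fixed_point d T alpha F Hd Halpha HT HC1 x0 Hc HFlim)
    as [u [Hu _]].
  exists u. split; [exact Hu | split].
  - intros v Hv. now apply (contraction_fixed_point_unique d T alpha F).
  - intros x.
    destruct (contraction_orbit_converges_to_fixed_point d T alpha F Hd Halpha HT HC1 x Hc HFlim)
      as [l [Hl Hconv]].
    now rewrite <- (contraction_fixed_point_unique d T alpha F Hd HT HC1 u l Hu Hl).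
Qed.
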